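(* Let $H=(V,E)$ be a $k$-uniform hypergraph and let $\mathcal{S}$ be the family of all its exact covers, i.e. all $E'\subseteq E$ with $\bigcup_{e\in E'}e=V$ and $e_1\cap e_2=\emptyset$ for distinct $e_1,e_2\in E'$. Let $f:E\to\mathbb{Z}_{>0}$ be any function and $m$ a positive integer. Then for every subset $U\subseteq V$, in the polynomial ring over $\mathrm{GF}(2^m)$ in the variables $\{v_e\}_{e\in E}$, $$\sum_{X\subseteq V\setminus U} W_{2,f}(H,U,X)=\sum_{E'\in\mathcal{S}}\prod_{e\in E'}v_e^{f(e)},$$ where $$W_{2,f}(H,U,X)=\sum_{E''}\prod_{e\in E''}v_e^{f(e)},$$ the sum ranging over all $E''\subseteq E$ satisfying: (Avoidance) $e\cap X=\emptyset$ for all $e\in E''$; (Cardinality) $|E''|=|V|/k$; (Coverage) $U\subseteq\bigcup_{e\in E''}e$; (Disjointness) $e_1\cap e_2\cap U=\emptyset$ for all distinct $e_1,e_2\in E''$.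
   Context: A hypergraph $H=(V,E)$ consists of a finite vertex set $V$ and a multiset $E$ of subsets of $V$; it is $k$-uniform if every edge has exactly $k$ vertices. Subsets of $E$ are sub-multisets, with each occurrence of an edge treated as a distinct element carrying its own variable $v_e$. *)

From HB Require Import structures.
From mathcomp Require Import all_boot all_order all_algebra all_field.
From mathcomp Require Import mpoly.
Set Implicit Arguments.
Unset Strict Implicit.
Unset Printing Implicit Defensive.
Import GRing.Theory.
Local Open Scope ring_scope.

(* A hypergraph H = (V, E): V is a finite type, E is a multiset of edges,
   represented as a family of subsets of V indexed by 'I_n (each index is a
   distinct edge occurrence, carrying its own variable 'X_i). *)

Definition k_uniform (V : finType) (n k : nat) (E : 'I_n -> {set V}) : Prop :=
  forall i, #|E i| = k.

Definition edge_union (V : finType) (n : nat) (E : 'I_n -> {set V})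
  (S : {set 'I_n}) : {set V} := \bigcup_(i in S) E i.

Definition exact_cover (V : finType) (n : nat) (E : 'I_n -> {set V})
  (S : {set 'I_n}) : bool :=
  (edge_union E S == [set: V]) &&
  [forall i in S, forall j in S, (i != j) ==> [disjoint E i & E j]].

Definition edge_monomial (F : fieldType) (n : nat) (f : 'I_n -> nat)
  (S : {set 'I_n}) : {mpoly F[n]} := \prod_(i in S) 'X_i ^+ f i.

(* the conditions on E'' in W_{2,f}(H,U,X); |E''| = |V|/k is written
   |E''| * k = |V| *)
Definition W_admissible (V : finType) (n k : nat) (E : 'I_n -> {set V})
  (U X : {set V}) (S : {set 'I_n}) : bool :=
  [&& [forall i in S, [disjoint E i & X]],
      #|S| * k == #|V|,
      U \subset edge_union E S &
      [forall i in S, forall j in S,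
         (i != j) ==> [disjoint E i :&: E j & U]]].

Definition W2f (F : fieldType) (V : finType) (n k : nat)
  (E : 'I_n -> {set V}) (f : 'I_n -> nat) (U X : {set V}) : {mpoly F[n]} :=
  \sum_(S : {set 'I_n} | W_admissible k E U X S) edge_monomial F f S.

From HB Require Import structures.
From mathcomp Require Import all_boot all_order all_algebra all_field.
From mathcomp Require Import mpoly.
Local Open Scope ring_scope.
Import GRing.Theory.

(* Exchanging the two sums, the monomial of a fixed E'' is counted once for
   every X ⊆ V \ U avoiding its edges, i.e. 2^|(V \ U) \ ∪E''| times; in
   characteristic 2 this vanishes unless ∪E'' ⊇ V \ U, which together with
   coverage of U means that E'' covers V.  For k-uniform E'' with
   |E''| k = |V|, covering V forces the edges to be pairwise disjoint (the
   union bound is then tight), so the surviving E'' are exactly the exact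
   covers. *)

Lemma card_subsets_disjoint (T : finType) (A B : {set T}) :
  #|[pred X : {set T} | (X \subset A) && [disjoint B & X]]| = (2 ^ #|A :\: B|)%N.
Proof.
rewrite -card_powerset; apply: eq_card => X.
by rewrite powersetE subsetD disjoint_sym inE.
Qed.

Lemma natr_exp2_pchar2 (R : nzRingType) c :
  2%N \in [pchar R] -> (2 ^ c)%:R = (c == 0)%:R :> R.
Proof. by case: c => // c ch2R; rewrite expnS natrM (pcharf0 ch2R) mul0r. Qed.

Lemma sum_subsets_disjoint_pchar2 (R : nzRingType) (T : finType)
    (A B : {set T}) (x : R) : 2%N \in [pchar R] ->
  \sum_(X : {set T} | (X \subset A) && [disjoint B & X]) x = x *+ (A \subset B).
Proof.
move=> ch2R; rewrite sumr_const card_subsets_disjoint -mulr_natr.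
by rewrite natr_exp2_pchar2 // cards_eq0 setD_eq0 mulr_natr.
Qed.

Lemma pchar_mpoly (R : nzRingType) n p :
  p \in [pchar R] -> p \in [pchar {mpoly R[n]}].
Proof.
case/andP=> p_pr /eqP pR0; apply/andP; split=> //.
by apply/eqP; rewrite -mpolyC_nat pR0 mpolyC0.
Qed.

Section EdgeFamily.
Variables (V : finType) (n : nat) (E : 'I_n -> {set V}).

Definition pairwise_disjoint (S : {set 'I_n}) : bool :=
  [forall i in S, forall j in S, (i != j) ==> [disjoint E i & E j]].

Lemma pairwise_disjointP (S : {set 'I_n}) :
  reflect {in S &, forall i j, i != j -> [disjoint E i & E j]}
          (pairwise_disjoint S).
Proof.
apply: (iffP forall_inP) => [h i j iS jS | h i iS].
  exact/implyP/(forall_inP (h i iS)).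
by apply/forall_inP => j jS; apply/implyP/h.
Qed.

Lemma pairwise_disjointD1 {S : {set 'I_n}} {i : 'I_n} : i \in S ->
  pairwise_disjoint S =
  [disjoint E i & edge_union E (S :\ i)] && pairwise_disjoint (S :\ i).
Proof.
move=> iS; apply/pairwise_disjointP/andP => [dS | [diS /pairwise_disjointP dSi]].
  split.
    apply: bigcup_disjoint => j /setD1P[ji jS].
    by apply: dS; rewrite // eq_sym.
  by apply/pairwise_disjointP => a b /setD1P[_ aS] /setD1P[_ bS]; apply: dS.
have dEi j : j \in S :\ i -> [disjoint E i & E j].
  by move=> jSi; apply: disjointWr diS; apply: bigcup_sup.
move=> a b aS bS.
have [-> | ai] := eqVneq a i => [ib | ab].
  by apply: dEi; rewrite in_setD1 bS andbT eq_sym.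
have [-> | bi] := eqVneq b i.
  by rewrite disjoint_sym; apply: dEi; rewrite in_setD1 aS andbT.
by apply: dSi; rewrite // in_setD1 ?ai ?bi.
Qed.

Lemma leq_card_edge_union (S : {set 'I_n}) :
  (#|edge_union E S| <= \sum_(i in S) #|E i| ?= iff pairwise_disjoint S)%N.
Proof.
elim: {S}#|S| {-2}S (erefl #|S|) => [S /cards0_eq -> | c IH S cardS].
  rewrite /edge_union !big_set0 cards0; split => //.
  by apply/esym/pairwise_disjointP => i; rewrite inE.
have [i iS] : exists i, i \in S by apply/set0Pn; rewrite -card_gt0 cardS.
rewrite /edge_union (big_setD1 i iS) [X in (_ <= X ?= iff _)%N](big_setD1 i iS) /=.
rewrite -/(edge_union E _) (pairwise_disjointD1 iS).
apply: leqif_trans (leq_card_setU _ _) _.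
rewrite (mono_leqif (leq_add2l _)); apply: IH.
by move: cardS; rewrite (cardsD1 i) iS => -[].
Qed.

Lemma leq_card_edge_union_uniform k (S : {set 'I_n}) : k_uniform k E ->
  (#|edge_union E S| <= #|S| * k ?= iff pairwise_disjoint S)%N.
Proof.
move=> unifE; rewrite -sum_nat_const.
rewrite (eq_bigr (fun i => #|E i|)) => [|i _]; last by rewrite unifE.
exact: leq_card_edge_union.
Qed.

Lemma exact_cover_uniformE k (S : {set 'I_n}) : k_uniform k E ->
  exact_cover E S = (edge_union E S == setT) && (#|S| * k == #|V|)%N.
Proof.
move=> unifE; rewrite /exact_cover -/(pairwise_disjoint S).
have [coverS | //] := eqP; rewrite -cardsT -coverS.
by rewrite eq_sym (leq_card_edge_union_uniform k S unifE).2.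
Qed.

Lemma edge_union_disjointE (S : {set 'I_n}) (X : {set V}) :
  [forall i in S, [disjoint E i & X]] = [disjoint edge_union E S & X].
Proof.
rewrite disjoint_sym; apply/forall_inP/bigcup_disjointP => dSX i /dSX;
  by rewrite disjoint_sym.
Qed.

Lemma W_admissible_avoidE k U X (S : {set 'I_n}) :
  W_admissible k E U X S =
  [disjoint edge_union E S & X] && W_admissible k E U set0 S.
Proof.
rewrite /W_admissible !edge_union_disjointE.
by rewrite [[disjoint _ & set0]]disjoints_subset setC0 subsetT.
Qed.

Lemma exact_cover_admissibleE k U (S : {set 'I_n}) : k_uniform k E ->
  exact_cover E S = W_admissible k E U set0 S && (~: U \subset edge_union E S).
Proof.
move=> unifE; apply/idP/andP => [coverS | [admS coU]].
  have /andP[/eqP unionS /pairwise_disjointP dS] := coverS.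
  move: coverS; rewrite (exact_cover_uniformE k S unifE) unionS eqxx => /= cardS.
  rewrite /W_admissible edge_union_disjointE unionS !subsetT cardS.
  rewrite disjoints_subset setC0 subsetT; split=> //.
  apply/forall_inP => i iS; apply/forall_inP => j jS; apply/implyP => ij.
  by rewrite (disjoint_setI0 (dS i j iS jS ij)) disjoints_subset sub0set.
move: admS => /and4P[_ cardS coverU _].
rewrite (exact_cover_uniformE k S unifE) cardS andbT eqEsubset subsetT.
by rewrite -(setUCr U) subUset coverU.
Qed.

Lemma sum_W_admissible_pchar2 (R : nzRingType) k U (S : {set 'I_n}) (x : R) :
  2%N \in [pchar R] -> k_uniform k E ->
  \sum_(X : {set V} | (X \subset ~: U) && W_admissible k E U X S) x =
  x *+ exact_cover E S.
Proof.
move=> ch2R unifE; rewrite (exact_cover_admissibleE k U S unifE).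
case admS: (W_admissible k E U set0 S); last first.
  by rewrite big_pred0 // => X; rewrite W_admissible_avoidE admS !andbF.
under eq_bigl => X do rewrite W_admissible_avoidE admS andbT.
exact: sum_subsets_disjoint_pchar2.
Qed.

End EdgeFamily.

Theorem lemma2p4 (V : finType) (n k : nat) (E : 'I_n -> {set V})
  (f : 'I_n -> nat) (m : nat) (F : finFieldType) :
  (0 < k)%N -> k_uniform k E -> (forall i, 0 < f i)%N -> (0 < m)%N ->
  2%N \in [pchar F] -> #|F| = (2 ^ m)%N ->
  forall U : {set V},
    \sum_(X : {set V} | X \subset ~: U) W2f F k E f U X =
    \sum_(S : {set 'I_n} | exact_cover E S) edge_monomial F f S.
Proof.
move=> _ unifE _ _ ch2F _ U.
rewrite /W2f (exchange_big_dep xpredT) //= [RHS]big_mkcond /=.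
apply: eq_bigr => S _.
rewrite sum_W_admissible_pchar2 ?mulrb //; exact: pchar_mpoly.
Qed.
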